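(* Let $M$ be an upper triangular matrix of size $d+1$ with non-negative integer entries. Then $M$ is the rank matrix $M_{\ell,A}$ of some Artinian Gorenstein algebra $A$ with socle degree $d$ and some linear form $\ell\in A_1$ only if the following conditions are satisfied. \begin{itemize} \item[$(i)$] For every $0\leq i\leq d$, $\operatorname{diag}(i,M)$ is an O-sequence, and $h_A=\operatorname{diag}(0,M)$; \item[$(ii)$] for every $0\leq i\leq d-1$, the difference vector $\operatorname{diag}(i,M)-\left(\operatorname{diag}(i+1,M)\right)_+$ is an O-sequence; \item[$(iii)$] for any $2\times 2$ square submatrix of successive entries on and above the diagonal of $M$ of the form $\begin{pmatrix} u&v\\ w&z\end{pmatrix}$ we have that $w+v\geq u+z$. \end{itemize}
   Context: Let $S=\mathsf{k}[x_1,\dots,x_n]$, $n\geq 2$, be a standard graded polynomial ring over a field $\mathsf{k}$ of characteristic zero, acting by differentiation on the dual ring $R=\mathsf{k}[X_1,\dots,X_n]$. Let $A=S/\operatorname{ann}(F)$ be a graded Artinian Gorenstein algebra with dual generator $F\in R_d$, $d\geq 2$, so $A$ has socle degree $d$ and Hilbert function $h_A$ with $h_A(i)=\dim_{\mathsf{k}}A_i$. For a linear form $\ell\in A_1$, the rank matrix $M_{\ell,A}$ is the $(d+1)\times(d+1)$ upper triangular matrix (rows and columns indexed $0,\dots,d$) with $(M_{\ell,A})_{i,j}=\operatorname{rk}(\times \ell^{j-i}:A_i\to A_j)$ for $i\leq j$ and $0$ for $i>j$. For a matrix $M$ of size $d+1$ and $0\leq i\leq d$, $\operatorname{diag}(i,M)=(M_{0,i},M_{1,i+1},\dots,M_{d-i,d})$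 is its $i$-th diagonal vector. An O-sequence is a sequence of non-negative integers that occurs as the Hilbert function of a standard graded algebra (Macaulay's characterization). For a vector $\mathbf{v}$ of length $l$, $\mathbf{v}_+=(0,\mathbf{v})$ denotes the vector of length $l+1$ obtained by prepending a zero. *)

From HB Require Import structures.
From mathcomp Require Import all_boot all_order all_algebra.
From mathcomp Require Import mpoly.
Set Implicit Arguments. Unset Strict Implicit. Unset Printing Implicit Defensive.
Import GRing.Theory.
Local Open Scope ring_scope.

Section Defs.
Variables (k : fieldType) (N : nat).
Notation poly := {mpoly k[N]}.

(* homogeneous polynomials of (total) degree t (0 is homogeneous of every degree) *)
Definition homog_of (t : nat) (p : poly) : Prop := p \is t.-homog.

(* action of S = k[x_1..x_N] on the dual ring R = k[X_1..X_N] by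
   differentiation: x^m o F = d^m F / dX^m, extended linearly *)
Definition contract (g F : poly) : poly :=
  \sum_(m <- msupp g) g@_m *: mderivm m F.

Definition ann (F : poly) (g : poly) : Prop := contract g F = 0.

Definition indep_mod (W : poly -> Prop) (r : nat) (g : 'I_r -> poly) : Prop :=
  forall c : 'I_r -> k, W (\sum_(i < r) c i *: g i) -> forall i, c i = 0.

(* qdim V W r : the image of the set V in the quotient space S/W spans a
   space of dimension r (a maximal linearly independent family of classes
   of elements of V has exactly r elements) *)
Definition qdim (V W : poly -> Prop) (r : nat) : Prop :=
  (exists g : 'I_r -> poly, (forall i, V (g i)) /\ indep_mod W g) /\
  (forall g : 'I_r.+1 -> poly, (forall i, V (g i)) -> ~ indep_mod W g).

Definition homog_ideal (I : poly -> Prop) : Prop :=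
  [/\ I 0,
      forall p q, I p -> I q -> I (p + q),
      forall p q, I p -> I (q * p) &
      forall p t, I p -> I (pihomog mdeg t p)].

End Defs.

(* Hilbert function value of A = S/ann(F) in degree t : h_A(t) = r *)
Definition hilb_AG (k : fieldType) (n : nat) (F : {mpoly k[n]}) (t r : nat) :=
  qdim (@homog_of k n t) (ann F) r.

(* rk( x l^(j-i) : A_i -> A_j ) = r, where A = S/ann(F) and l in S_1 is a
   representative of the linear form in A_1 *)
Definition rk_mult (k : fieldType) (n : nat) (F l : {mpoly k[n]}) (i j r : nat) :=
  qdim (fun p => exists g, homog_of i g /\ p = l ^+ (j - i) * g) (ann F) r.

(* O-sequence: a (finite) sequence of non-negative integers that occurs as
   (an initial segment of) the Hilbert function of a standard graded
   k-algebra, i.e. of a quotient k[x_1..x_N]/I by a homogeneous ideal I *)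
Definition Oseq (k : fieldType) (h : seq int) : Prop :=
  exists (N : nat) (I : {mpoly k[N]} -> Prop), homog_ideal I /\
    forall t, (t < size h)%N ->
      exists r : nat, h`_t = r%:Z /\ qdim (@homog_of k N t) I r.

Definition is_rank_matrix (k : fieldType) (n d : nat) (F l : {mpoly k[n]})
    (M : 'M[nat]_(d.+1)) : Prop :=
  forall i j : 'I_(d.+1),
    if (i <= j)%N then rk_mult F l i j (M i j) else M i j = 0%N.

Definition mxe (d : nat) (M : 'M[nat]_(d.+1)) (i j : nat) : nat :=
  M (inord i) (inord j).

Definition mdiag (d : nat) (i : nat) (M : 'M[nat]_(d.+1)) : seq nat :=
  mkseq (fun t => mxe M t (t + i)) (d.+1 - i).

Definition vplus (v : seq nat) : seq nat := 0%N :: v.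

Definition vsub (v w : seq nat) : seq int :=
  [seq (p.1)%:Z - (p.2)%:Z | p <- zip v w].

(* The catalecticant maps g |-> g o F identify A_e = S_e / ann(F)_e with the space
   S_e o F of derivatives of F of degree d - e, and (l^a g) o F = l^a o (g o F), so
   multiplication by l^a on A becomes contraction by l^a and
   M_(i,j) = dim (l^(j-i) o S_i o F).
   (i)  diag(i,M) is the Hilbert function of S/J with J = {g | (l^i g) o F = 0}.
   (ii) diag(i,M) - diag(i+1,M)_+ is the Hilbert function of S/J with
        J = {g | (l^i g) o F \in l^(i+1) S o F}, since in degree t this quotient is
        l^i A_t / l^(i+1) A_(t-1); a homogeneous l^(i+1) q can be found by
        comparing degrees.
   (iii) is Frobenius' rank inequality rk(BC) + rk(CD) <= rk(C) + rk(BCD) for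
        C = l^(j-i-1) : A_(i+1) -> A_j and B, D multiplication by l. *)

From HB Require Import structures.
From mathcomp Require Import all_boot all_order all_algebra.
From mathcomp Require Import mpoly ssrcomplements.
From mathcomp Require Import zify.
Set Implicit Arguments. Unset Strict Implicit. Unset Printing Implicit Defensive.
Import GRing.Theory.
Local Open Scope ring_scope.

Section Contraction.
Variables (k : fieldType) (n : nat).
Implicit Types (p q G : {mpoly k[n]}).

Lemma contract_wE b p G : (msize p <= b)%N ->
  contract p G = \sum_(m : 'X_{1..n < b}) p@_m *: mderivm m G.
Proof.
move=> le_pb; rewrite /contract (big_mksub 'X_{1..n < b}) ?msupp_uniq //=.
- by rewrite big_rmcond //= => m /memN_msupp_eq0 ->; rewrite scale0r.
- by move=> m /msize_mdeg_lt /leq_trans; apply.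
Qed.

Definition contract_on G g := contract g G.

Lemma contract_on_is_linear G : linear (contract_on G).
Proof.
move=> c p q; set b := maxn (msize (c *: p + q)) (maxn (msize p) (msize q)).
rewrite /contract_on !(@contract_wE b) ?leq_max ?leqnn ?orbT //.
rewrite scaler_sumr -big_split; apply: eq_bigr => m _.
by rewrite linearP scalerDl scalerA.
Qed.

HB.instance Definition _ G := GRing.isLinear.Build k {mpoly k[n]} {mpoly k[n]}
  _ (contract_on G) (contract_on_is_linear G).

Lemma contract0l G : contract 0 G = 0.
Proof. exact: (raddf0 (contract_on G)). Qed.

Lemma contractDl p q G : contract (p + q) G = contract p G + contract q G.
Proof. exact: (raddfD (contract_on G)). Qed.

Lemma contractZl c p G : contract (c *: p) G = c *: contract p G.
Proof. by rewrite -[LHS]/(contract_on G (c *: p)) linearZ. Qed.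

Lemma contract_suml I (r : seq I) (P : pred I) (f : I -> {mpoly k[n]}) G :
  contract (\sum_(i <- r | P i) f i) G = \sum_(i <- r | P i) contract (f i) G.
Proof. exact: (raddf_sum (contract_on G)). Qed.

Lemma contract_is_linear p : linear (contract p).
Proof.
move=> c G H; rewrite /contract scaler_sumr -big_split; apply: eq_bigr => m _.
by rewrite linearP scalerDr !scalerA mulrC.
Qed.

HB.instance Definition _ p := GRing.isLinear.Build k {mpoly k[n]} {mpoly k[n]}
  _ (contract p) (contract_is_linear p).

Lemma contractX m G : contract 'X_[m] G = mderivm m G.
Proof. by rewrite /contract msuppX big_seq1 mcoeffX eqxx scale1r. Qed.

Lemma contractM p q G : contract (p * q) G = contract p (contract q G).
Proof.
rewrite {1}[p]mpolyE mulr_suml contract_suml {2}/contract.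
apply: eq_bigr => m _; rewrite -scalerAl contractZl; congr (_ *: _).
rewrite {1}[q]mpolyE mulr_sumr contract_suml [in RHS]/contract raddf_sum /=.
apply: eq_bigr => m' _.
rewrite -scalerAr contractZl -mpolyXD contractX linearZ /=.
by rewrite addmC mderivmDm.
Qed.

Lemma mderivmX_dhomog (m m' : 'X_{1..n}) :
  mderivm m ('X_[m'] : {mpoly k[n]}) \is (mdeg m' - mdeg m).-homog /\
  ((mdeg m' < mdeg m)%N -> mderivm m ('X_[m'] : {mpoly k[n]}) = 0).
Proof.
rewrite mderivmX; have [-> | ] := eqVneq (\prod_(i < n) (m' i)^_(m i))%N 0%N.
  by rewrite scale0r dhomog0.
rewrite prod_nat_seq_neq0 => /allP ffact_neq0.
have le_mm' : (m <= m')%MM.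
  apply/mnm_lepP => i; have := ffact_neq0 i (mem_index_enum i).
  by rewrite /= -lt0n ffact_gt0.
have mdeg_sub : mdeg m' = (mdeg (m' - m) + mdeg m)%N by rewrite -mdegD submK.
split; first by rewrite rpredZ // dhomogX mdeg_sub addnK.
by rewrite mdeg_sub ltnNge leq_addl.
Qed.

Lemma mderivm_dhomog g m G : G \is g.-homog ->
  mderivm m G \is (g - mdeg m).-homog /\ ((g < mdeg m)%N -> mderivm m G = 0).
Proof.
move=> /dhomogP G_homog.
have -> : mderivm m G = \sum_(m' <- msupp G) G@_m' *: mderivm m 'X_[m'].
  by rewrite {1}[G]mpolyE raddf_sum /=; apply: eq_bigr => m' _; rewrite mderivmZ.
rewrite big_seq; split.
  by apply: rpred_sum => m' /G_homog <-; rewrite rpredZ //; case: (mderivmX_dhomog m m').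
move=> lt_g; apply: big1 => m' /G_homog eq_g.
by have [_ ->] := mderivmX_dhomog m m'; rewrite ?scaler0 ?eq_g.
Qed.

Lemma contract_dhomog e g p G : p \is e.-homog -> G \is g.-homog ->
  contract p G \is (g - e).-homog.
Proof.
move=> /dhomogP p_homog G_homog; rewrite /contract big_seq rpred_sum // => m /p_homog <-.
by rewrite rpredZ //; case: (mderivm_dhomog m G_homog).
Qed.

Lemma contract_dhomog_eq0 e g p G : p \is e.-homog -> G \is g.-homog ->
  (g < e)%N -> contract p G = 0.
Proof.
move=> /dhomogP p_homog G_homog lt_ge; rewrite /contract big_seq big1 // => m /p_homog eq_e.
by have [_ ->] := mderivm_dhomog m G_homog; rewrite ?scaler0 ?eq_e.
Qed.

Lemma pihomogMl e s q p : q \is e.-homog ->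
  pihomog mdeg s (q * p) = if (e <= s)%N then q * pihomog mdeg (s - e) p else 0.
Proof.
move=> q_homog; set B := maxn (msize p) s.+1.
rewrite {1}[p](@pihomog_partitionE _ _ mdeg B) ?leq_maxl // mulr_sumr raddf_sum /=.
have pihomogMl_component b : pihomog mdeg s (q * pihomog mdeg b p) =
    if (e + b == s)%N then q * pihomog mdeg b p else 0.
  have qp_homog : q * pihomog mdeg b p \is (e + b).-homog.
    by rewrite dhomogM // pihomogP.
  case: eqP => [<- | /eqP ne]; first by rewrite pihomog_dE.
  exact: pihomog_ne0 ne qp_homog.
under eq_bigr do rewrite pihomogMl_component.
case: leqP => [le_es | lt_se]; last first.
  rewrite big1 // => b _; case: eqP => // eq_s.
  by move: lt_se; rewrite -eq_s ltnNge leq_addr.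
have lt_B : (s - e < B)%N by rewrite leq_max ltnS leq_subr orbT.
rewrite (bigD1 (Ordinal lt_B)) //= subnKC // eqxx big1 ?addr0 // => b ne_b.
by case: eqP => // eq_s; case/eqP: ne_b; apply: val_inj; rewrite /= -eq_s addKn.
Qed.

Lemma pihomog_contract g u p G : G \is g.-homog -> (u <= g)%N ->
  pihomog mdeg u (contract p G) = contract (pihomog mdeg (g - u) p) G.
Proof.
move=> G_homog le_ug; set B := maxn (msize p) g.+1.
rewrite {1}[p](@pihomog_partitionE _ _ mdeg B) ?leq_maxl // contract_suml raddf_sum /=.
have pihomog_contract_component b : pihomog mdeg u (contract (pihomog mdeg b p) G) =
    if (b == g - u)%N then contract (pihomog mdeg b p) G else 0.
  have b_homog := pihomogP mdeg b p.
  have [le_bg | lt_gb] := leqP b g; last first.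
    by rewrite (contract_dhomog_eq0 b_homog G_homog lt_gb) raddf0; case: eqP.
  have contract_homog := contract_dhomog b_homog G_homog.
  case: eqP => [eq_b | ne_b].
    by rewrite pihomog_dE // -(subKn le_ug) -eq_b.
  apply: (pihomog_ne0 _ contract_homog); apply: contraNneq (introN eqP ne_b) => <-.
  by rewrite subKn.
under eq_bigr do rewrite pihomog_contract_component.
have lt_B : (g - u < B)%N by rewrite leq_max ltnS leq_subr orbT.
rewrite (bigD1 (Ordinal lt_B)) //= eqxx big1 ?addr0 // => b ne_b.
by case: eqP => // eq_b; case/eqP: ne_b; apply: val_inj.
Qed.

End Contraction.

Section HomogCore.
Variables (k : fieldType) (n : nat).
Implicit Types (p q : {mpoly k[n]}).

(* The largest homogeneous ideal contained in the ideal [J]. *)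
Definition homog_core (J : {mpoly k[n]} -> Prop) p := forall s, J (pihomog mdeg s p).

Lemma homog_core_ideal (J : {mpoly k[n]} -> Prop) : J 0 ->
    (forall p q, J p -> J q -> J (p + q)) -> (forall p q, J p -> J (q * p)) ->
  homog_ideal (homog_core J).
Proof.
move=> J0 JD JM; split.
- by move=> s; rewrite pihomog0.
- by move=> p q Jp Jq s; rewrite pihomogD; apply: JD.
- move=> p q Jp s; rewrite {1}[q](@pihomog_partitionE _ _ mdeg (msize q)) //.
  rewrite mulr_suml raddf_sum /=; apply: (big_ind J) => //= a _.
  by rewrite (pihomogMl _ _ (pihomogP mdeg a q)); case: leqP => // _; apply: JM.
- move=> p t Jp s; have [<- | ne_ts] := eqVneq t s; first by rewrite pihomog_id.
  by rewrite (pihomog_ne0 ne_ts (pihomogP mdeg t p)).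
Qed.

Lemma homog_core_dhomog (J : {mpoly k[n]} -> Prop) t p : J 0 -> p \is t.-homog ->
  homog_core J p <-> J p.
Proof.
move=> J0 p_homog; split=> [Jp | Jp s]; first by have := Jp t; rewrite pihomog_dE.
have [<- | ne_ts] := eqVneq t s; first by rewrite pihomog_dE.
by rewrite (pihomog_ne0 ne_ts p_homog).
Qed.

End HomogCore.

Section FiniteDimension.
Variable K : fieldType.

Lemma linfunE_linear (aT rT : vectType K) (f : aT -> rT) : linear f -> linfun f =1 f.
Proof.
move=> f_linear v.
exact: (lfunE (HB.pack f (GRing.isLinear.Build K aT rT *:%R f f_linear)) v).
Qed.

Lemma free_tupleP (vT : vectType K) s (w : 'I_s -> vT) :
  reflect (forall c, \sum_(i < s) c i *: w i = 0 -> forall i, c i = 0)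
          (free [tuple w i | i < s]).
Proof.
have nth_w c : \sum_(i < s) c i *: [tuple w i | i < s]`_i = \sum_(i < s) c i *: w i.
  by apply: eq_bigr => i _; rewrite -tnth_nth tnth_mktuple.
by apply: (iffP freeP) => w_free c; [rewrite -nth_w | rewrite nth_w]; apply: w_free.
Qed.

Lemma free_familyP (vT : vectType K) (U : {vspace vT}) s :
  (exists2 w : 'I_s -> vT, (forall i, w i \in U) & free [tuple w i | i < s]) <->
  (s <= \dim U)%N.
Proof.
split=> [[w wU /eqnP w_free] | le_sU].
  rewrite -[s](size_tuple [tuple w i | i < s]) -w_free dimvS //.
  by apply/span_subvP => _ /mapP[i _ ->].
have le_s_size : (s <= size (vbasis U))%N by rewrite size_tuple.
exists (fun i : 'I_s => (vbasis U)`_i) => [i|].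
  by apply/vbasis_mem/mem_nth/(leq_trans (ltn_ord i)).
have -> : [tuple (vbasis U)`_i | i < s] = take s (vbasis U) :> seq vT.
  by rewrite -(map_nth_iota0 0) // -val_enum_ord -map_comp.
apply: (@catl_free _ _ (drop s (vbasis U))).
by rewrite cat_take_drop (basis_free (vbasisP U)).
Qed.

Lemma dimv_limg_frobenius (aT rT : vectType K) (f : 'Hom(aT, rT)) (X Y : {vspace aT}) :
  (Y <= X)%VS -> (\dim (f @: X) + \dim Y <= \dim X + \dim (f @: Y))%N.
Proof.
move=> le_YX; have := limg_ker_dim f X; have := limg_ker_dim f Y.
suff : (\dim (Y :&: lker f) <= \dim (X :&: lker f))%N by lia.
exact/dimvS/capvS.
Qed.

Lemma lker_projC (vT : vectType K) (Y : {vspace vT}) : lker (\1 - projv Y)%VF = Y.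
Proof.
apply/vspaceP => v; rewrite memv_ker add_lfunE opp_lfunE id_lfunE subr_eq0.
by apply/eqP/idP => [-> | /projv_id ->]; rewrite ?memv_proj.
Qed.

End FiniteDimension.

Section QuotientDimension.
Variables (K : fieldType) (N : nat) (vT rT : vectType K).
Variables (emb : {linear vT -> {mpoly K[N]}}) (f : 'Hom(vT, rT)) (X : {vspace vT}).
Variables (P W : {mpoly K[N]} -> Prop).
Hypotheses (P_emb : forall p, P p <-> exists2 v, v \in X & p = emb v)
           (W_emb : forall v, W (emb v) <-> f v = 0).

Lemma indep_mod_dimP s :
  (exists g : 'I_s -> {mpoly K[N]}, (forall i, P (g i)) /\ indep_mod W g) <->
  (s <= \dim (f @: X))%N.
Proof.
have emb_lcomb (v : 'I_s -> vT) c :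
    emb (\sum_(i < s) c i *: v i) = \sum_(i < s) c i *: emb (v i).
  by rewrite linear_sum; apply: eq_bigr => i _; rewrite linearZ.
have f_lcomb (v : 'I_s -> vT) c :
    f (\sum_(i < s) c i *: v i) = \sum_(i < s) c i *: f (v i).
  by rewrite linear_sum; apply: eq_bigr => i _; rewrite linearZ.
rewrite -free_familyP; split=> [[g [Pg g_indep]] | [w wfX /free_tupleP w_free]].
  have /fin_all_exists2[v vX def_g] i : exists2 v, v \in X & g i = emb v.
    exact/P_emb.
  exists (fun i => f (v i)) => [i | ]; first exact: memv_img.
  apply/free_tupleP => c; rewrite -f_lcomb -W_emb emb_lcomb => W_lcomb.
  by apply: g_indep; under eq_bigr do rewrite def_g.
have /fin_all_exists2[v vX def_w] i : exists2 v, v \in X & w i = f v.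
  exact/memv_imgP.
exists (fun i => emb (v i)); split=> [i | c]; first by apply/P_emb; exists (v i).
rewrite -emb_lcomb W_emb f_lcomb => f_lcomb0; apply: w_free.
by under eq_bigr do rewrite def_w.
Qed.

Lemma qdim_limg r : qdim P W r <-> r = \dim (f @: X).
Proof.
split=> [[/indep_mod_dimP le_r r_max] | ->].
  apply/eqP; rewrite eqn_leq le_r leqNgt; apply/negP => /indep_mod_dimP[g [Pg g_indep]].
  exact: r_max g_indep.
split; first exact/indep_mod_dimP.
move=> g Pg g_indep; suff : ((\dim (f @: X)).+1 <= \dim (f @: X))%N by rewrite ltnn.
by apply/indep_mod_dimP; exists g.
Qed.

End QuotientDimension.

Lemma eq_qdim (k : fieldType) (N : nat) (P P' W : {mpoly k[N]} -> Prop) r :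
  (forall p, P p <-> P' p) -> qdim P W r -> qdim P' W r.
Proof.
move=> eqPP' [[g [Pg g_indep]] r_max]; split; first by exists g; split=> // i; apply/eqPP'.
by move=> g' P'g'; apply: r_max => i; apply/eqPP'.
Qed.

Section HomogeneousForms.
Variables (k : fieldType) (n : nat).
Local Notation S e := (dhomog n.+1 k e).

Lemma dhomog_val_eq0 e (v : S e) : val v = 0 <-> v = 0.
Proof. by split=> [v0 | ->] //; apply: val_inj. Qed.

Definition dhomog_lfun e e' (h : {linear {mpoly k[n.+1]} -> {mpoly k[n.+1]}}) :
  'Hom(S e, S e') := linfun (fun v : S e => indhomog e' (h (val v))).

Lemma dhomog_lfunE e e' (h : {linear {mpoly k[n.+1]} -> {mpoly k[n.+1]}}) :
  (forall p, p \is e.-homog -> h p \is e'.-homog) ->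
  forall v, val (dhomog_lfun e e' h v) = h (val v).
Proof.
move=> h_homog v.
have indhomogK (u : S e) : val (indhomog e' (h (val u))) = h (val u).
  by rewrite /indhomog insubdK // h_homog // dhomog_is_dhomog.
rewrite linfunE_linear ?indhomogK // => c u w; apply: val_inj.
have val_linear e0 (x y : S e0) : val (c *: x + y) = c *: val x + val y.
  exact: (linearP (@mpoly_of_dhomog _ _ e0)).
by rewrite indhomogK !val_linear !indhomogK linearP.
Qed.

Lemma homog_ofP t (p : {mpoly k[n.+1]}) :
  homog_of t p <-> exists2 v : S t, v \in fullv & p = val v.
Proof.
split=> [p_homog | [v _ ->]]; last exact: dhomog_is_dhomog.
by exists (indhomog t p); rewrite ?memvf // /indhomog insubdK.
Qed.

Lemma qdim_homog_core t (J : {mpoly k[n.+1]} -> Prop) (rT : vectType k)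
    (f : 'Hom(S t, rT)) (Y : {vspace rT}) :
    J 0 -> (Y <= limg f)%VS -> (forall v : S t, J (val v) <-> f v \in Y) ->
  qdim (homog_of t) (homog_core J) (\dim (limg f) - \dim Y).
Proof.
move=> J0 le_Yf J_f.
(* Reduce modulo [Y] by composing with [\1 - projv Y], whose kernel is [Y]. *)
apply/(qdim_limg (emb := @mpoly_of_dhomog _ _ t) (f := ((\1 - projv Y) \o f)%VF)).
- exact: homog_ofP.
- move=> v; rewrite (homog_core_dhomog J0 (dhomog_is_dhomog v)).
  apply: iff_trans (J_f v) _.
  by rewrite -{1}(lker_projC Y) memv_ker comp_lfunE; split=> /eqP.
rewrite limg_comp; have := limg_ker_dim (\1 - projv Y)%VF (limg f).
by rewrite lker_projC (capv_idPr le_Yf); lia.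
Qed.

End HomogeneousForms.

Lemma nth_vsub v w t : (t < minn (size v) (size w))%N ->
  (vsub v w)`_t = (nth 0%N v t)%:Z - (nth 0%N w t)%:Z.
Proof.
by move=> lt_t; rewrite (nth_map (0%N, 0%N)) ?size_zip // nth_zip_cond size_zip lt_t.
Qed.

Section RankMatrix.
Variables (k : fieldType) (n d : nat) (F l : {mpoly k[n.+1]}).
Hypotheses (F_homog : F \is d.-homog) (l_homog : l \is 1.-homog).

Local Notation S e := (dhomog n.+1 k e).

Lemma lpow_homog t : l ^+ t \is t.-homog.
Proof. by have := dhomogMn t l_homog; rewrite mul1n. Qed.

Definition catalecticant e : 'Hom(S e, S (d - e)) :=
  dhomog_lfun e (d - e) (contract_on F).

Definition contract_lpow a e e' : 'Hom(S e, S e') :=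
  dhomog_lfun e e' (contract (l ^+ a)).

Lemma catalecticantE e v : val (catalecticant e v) = contract (val v) F.
Proof. by apply: dhomog_lfunE => p p_homog; apply: contract_dhomog p_homog F_homog. Qed.

Lemma contract_lpowE a e e' v : e' = (e - a)%N ->
  val (contract_lpow a e e' v) = contract (l ^+ a) (val v).
Proof. by move=> ->; apply: dhomog_lfunE => p; apply: contract_dhomog (lpow_homog a). Qed.

Lemma contract_lpow_comp a b c e e' e'' :
    c = (a + b)%N -> e' = (e - a)%N -> e'' = (e' - b)%N ->
  (contract_lpow b e' e'' \o contract_lpow a e e')%VF = contract_lpow c e e''.
Proof.
move=> def_c def_e' def_e''; apply/lfunP => v; apply: val_inj.
rewrite comp_lfunE !contract_lpowE //; last by lia.
by rewrite -contractM -exprD addnC def_c.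
Qed.

Lemma contract_lpow_catalecticant a e e' v : e' = (d - e - a)%N ->
  val (contract_lpow a (d - e) e' (catalecticant e v)) = contract (l ^+ a * val v) F.
Proof. by move=> def_e'; rewrite contract_lpowE // catalecticantE contractM. Qed.

Lemma contract_l_limg_catalecticant i :
  (contract_lpow 1 (d - i) (d - i.+1) @: limg (catalecticant i)
     <= limg (catalecticant i.+1))%VS.
Proof.
apply/subvP => _ /memv_imgP[_ /memv_imgP[v _ ->] ->].
have lv_homog : l * val v \is i.+1.-homog.
  by have := dhomogM l_homog (dhomog_is_dhomog v); rewrite add1n.
apply/memv_imgP; exists (indhomog i.+1 (l * val v)); rewrite ?memvf //.
apply: val_inj; rewrite contract_lpow_catalecticant ?catalecticantE; last by lia.
by rewrite /indhomog insubdK // expr1.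
Qed.

Variable M : 'M[nat]_(d.+1).
Hypothesis M_rank : is_rank_matrix F l M.

Lemma rk_mult_mxe i j : (i <= j <= d)%N -> rk_mult F l i j (mxe M i j).
Proof.
case/andP=> le_ij le_jd; have := M_rank (inord i) (inord j).
by rewrite /mxe !inordK ?ltnS ?le_ij // (leq_trans le_ij).
Qed.

(* [a] and [e] are kept free so that callers can choose the index expressions,
   which appear in the types of the maps. *)
Lemma mxeE i j a e : (i <= j <= d)%N -> a = (j - i)%N -> e = (d - j)%N ->
  mxe M i j = \dim (contract_lpow a (d - i) e @: limg (catalecticant i)).
Proof.
move=> le_ijd def_a def_e; rewrite -limg_comp.
have := rk_mult_mxe le_ijd; apply: (iffLR (qdim_limg
  (emb := l ^+ a \*o @mpoly_of_dhomog _ _ i) (X := fullv) _ _ _)).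
- move=> p; rewrite def_a; split=> [[g [g_homog ->]] | [v _ ->]].
    by exists (indhomog i g); rewrite ?memvf //= /indhomog insubdK //.
  by exists (val v); split=> //; apply: dhomog_is_dhomog.
- move=> v; rewrite /ann /= -dhomog_val_eq0 comp_lfunE contract_lpow_catalecticant //.
  by lia.
Qed.

Lemma hilb_AG_mdiag0 t : (t <= d)%N -> hilb_AG F t (nth 0%N (mdiag 0 M) t).
Proof.
move=> le_td; rewrite /mdiag nth_mkseq ?subn0 ?ltnS // addn0.
apply: eq_qdim (rk_mult_mxe _); last by rewrite leqnn.
by move=> p; rewrite subnn expr0; split=> [[g [g_homog ->]] | p_homog];
  [rewrite mul1r | exists p; rewrite mul1r].
Qed.

Lemma Oseq_mdiag i : (i <= d)%N -> Oseq k [seq x%:Z | x <- mdiag i M].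
Proof.
move=> le_id; pose J p := contract (l ^+ i * p) F = 0.
have J0 : J 0 by rewrite /J mulr0 contract0l.
exists n.+1, (homog_core J); split.
  apply: homog_core_ideal => // [p q Jp Jq | p q Jp]; rewrite /J.
  - by rewrite mulrDr contractDl Jp Jq addr0.
  - by rewrite mulrCA contractM Jp raddf0.
move=> t; rewrite size_map size_mkseq => lt_t.
exists (mxe M t (t + i)); split; first by rewrite (nth_map 0%N) ?size_mkseq ?nth_mkseq.
rewrite (@mxeE t (t + i) i (d - t - i)) -?limg_comp; [|lia|lia|lia].
set f := (contract_lpow i (d - t) (d - t - i) \o catalecticant t)%VF.
have := qdim_homog_core J0 (sub0v (limg f)); rewrite dimv0 subn0; apply=> v.
rewrite /J -(contract_lpow_catalecticant v (erefl (d - t - i)%N)) dhomog_val_eq0 memv0.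
by rewrite /f comp_lfunE; apply: (rwP eqP).
Qed.

Lemma contract_lpowS_pihomog i t v q : (t + i <= d)%N -> v \is t.-homog ->
    contract (l ^+ i * v) F = contract (l ^+ i.+1 * q) F ->
  contract (l ^+ i * v) F =
    if t is t'.+1 then contract (l ^+ i.+1 * pihomog mdeg t' q) F else 0.
Proof.
move=> le_tid v_homog eq_lvq.
have lv_homog : l ^+ i * v \is (i + t).-homog by rewrite dhomogM ?lpow_homog.
rewrite -(pihomog_dE (contract_dhomog lv_homog F_homog)) eq_lvq.
rewrite (pihomog_contract _ F_homog (leq_subr _ _)) subKn; last by lia.
rewrite (pihomogMl _ _ (lpow_homog i.+1)).
case: t {le_tid v_homog lv_homog} => [|t]; first by rewrite addn0 ltnn contract0l.
by rewrite addnS ltnS leq_addr subSS addKn.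
Qed.

(* l^(i+1) A_(t-1) inside l^i A_t, on the dual side; it is 0 when t = 0. *)
Definition lpowS_image i t e : {vspace S e} :=
  if t is t'.+1 then limg (contract_lpow i.+1 (d - t') e \o catalecticant t') else 0%VS.

Lemma lpowS_image_sub i t e : e = (d - t - i)%N ->
  (lpowS_image i t e <= limg (contract_lpow i (d - t) e \o catalecticant t))%VS.
Proof.
case: t => [|t] def_e; first exact: sub0v.
have split_lpowS : contract_lpow i.+1 (d - t) e =
    (contract_lpow i (d - t.+1) e \o contract_lpow 1 (d - t) (d - t.+1))%VF.
  by apply/esym/contract_lpow_comp; lia.
by rewrite /= !limg_comp split_lpowS limg_comp limgS ?contract_l_limg_catalecticant.
Qed.

Lemma mem_lpowS_image i t e (v : S t) : (t + i <= d)%N -> e = (d - t - i)%N ->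
  contract_lpow i (d - t) e (catalecticant t v) \in lpowS_image i t e <->
  exists q, contract (l ^+ i * val v) F = contract (l ^+ i.+1 * q) F.
Proof.
move=> le_tid def_e.
split=> [|[q /(contract_lpowS_pihomog le_tid (dhomog_is_dhomog v))]].
  case: t v le_tid def_e => [|t] v le_tid def_e /=.
    rewrite memv0 => /eqP/dhomog_val_eq0.
    by rewrite contract_lpow_catalecticant // => ->; exists 0; rewrite mulr0 contract0l.
  case/memv_imgP=> u _ /(congr1 val).
  rewrite comp_lfunE !contract_lpow_catalecticant //; last by lia.
  by move=> ->; exists (val u).
case: t v le_tid def_e => [|t] v le_tid def_e /= eq_lv.
  by rewrite memv0; apply/eqP/dhomog_val_eq0; rewrite contract_lpow_catalecticant.
apply/memv_imgP; exists (indhomog t (pihomog mdeg t q)); rewrite ?memvf //.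
apply: val_inj; rewrite comp_lfunE !contract_lpow_catalecticant //; last by lia.
by rewrite eq_lv /indhomog insubdK // pihomogP.
Qed.

Lemma dim_lpowS_image i t e : (t + i <= d)%N -> e = (d - t - i)%N ->
  \dim (lpowS_image i t e) = nth 0%N (vplus (mdiag i.+1 M)) t.
Proof.
case: t => [|t] le_tid def_e; first exact: dimv0.
rewrite /= nth_mkseq; last by lia.
by rewrite limg_comp (@mxeE t (t + i.+1) i.+1 e) //; lia.
Qed.

Lemma Oseq_mdiag_sub i : (i < d)%N ->
  Oseq k (vsub (mdiag i M) (vplus (mdiag i.+1 M))).
Proof.
move=> lt_id.
pose J p := exists q, contract (l ^+ i * p) F = contract (l ^+ i.+1 * q) F.
have J0 : J 0 by exists 0; rewrite !mulr0.
exists n.+1, (homog_core J); split.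
  apply: homog_core_ideal => // [p q [p' eq_p] [q' eq_q] | p q [p' eq_p]].
  - by exists (p' + q'); rewrite !mulrDr !contractDl eq_p eq_q.
  - by exists (q * p'); rewrite [in LHS]mulrCA [in LHS]contractM eq_p -contractM mulrCA.
move=> t; rewrite size_map size_zip /= !size_mkseq => lt_t.
have le_tid : (t + i <= d)%N by lia.
set f := (contract_lpow i (d - t) (d - t - i) \o catalecticant t)%VF.
have le_Yf := lpowS_image_sub (erefl (d - t - i)%N).
exists (\dim (limg f) - \dim (lpowS_image i t (d - t - i)))%N; split.
  rewrite nth_vsub /= ?size_mkseq ?nth_mkseq; [|lia|lia].
  rewrite (@mxeE t (t + i) i (d - t - i)) -?limg_comp -/f; [|lia|lia|lia].
  by rewrite -(dim_lpowS_image le_tid (erefl (d - t - i)%N)) subzn // dimvS.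
apply: qdim_homog_core le_Yf _ => // v.
by rewrite /f comp_lfunE (mem_lpowS_image _ le_tid).
Qed.

Lemma mxe_frobenius i j : (i < j)%N -> (j < d)%N ->
  (mxe M i j + mxe M i.+1 j.+1 <= mxe M i.+1 j + mxe M i j.+1)%N.
Proof.
move=> lt_ij lt_jd.
set B := contract_lpow 1 (d - j) (d - j.+1).
set C := contract_lpow (j - i.+1) (d - i.+1) (d - j).
set D := contract_lpow 1 (d - i) (d - i.+1).
have CD : contract_lpow (j - i) (d - i) (d - j) = (C \o D)%VF.
  by apply/esym/contract_lpow_comp; lia.
have BC : contract_lpow (j.+1 - i.+1) (d - i.+1) (d - j.+1) = (B \o C)%VF.
  by apply/esym/contract_lpow_comp; lia.
have BCD : contract_lpow (j.+1 - i) (d - i) (d - j.+1) = (B \o (C \o D))%VF.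
  by rewrite -CD; apply/esym/contract_lpow_comp; lia.
have -> : mxe M i j = \dim (C @: (D @: limg (catalecticant i))).
  by rewrite (@mxeE i j (j - i) (d - j)) ?CD ?limg_comp //; lia.
have -> : mxe M i.+1 j.+1 = \dim (B @: (C @: limg (catalecticant i.+1))).
  by rewrite (@mxeE i.+1 j.+1 (j.+1 - i.+1) (d - j.+1)) ?BC ?limg_comp //; lia.
have -> : mxe M i.+1 j = \dim (C @: limg (catalecticant i.+1)).
  by rewrite (@mxeE i.+1 j (j - i.+1) (d - j)) //; lia.
have -> : mxe M i j.+1 = \dim (B @: (C @: (D @: limg (catalecticant i)))).
  by rewrite (@mxeE i j.+1 (j.+1 - i) (d - j.+1)) ?BCD ?limg_comp //; lia.
rewrite addnC.
by apply/dimv_limg_frobenius/limgS/contract_l_limg_catalecticant.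
Qed.

End RankMatrix.

Theorem corollary3p9 (k : fieldType) (n d : nat)
  (F l : {mpoly k[n]}) (M : 'M[nat]_(d.+1)) :
  [pchar k] =i pred0 ->
  (2 <= n)%N -> (2 <= d)%N ->
  F \is d.-homog -> F != 0 ->
  l \is 1.-homog ->
  (forall i j : 'I_(d.+1), (j < i)%N -> M i j = 0%N) ->
  is_rank_matrix F l M ->
  [/\ (forall i, (i <= d)%N -> Oseq k [seq x%:Z | x <- mdiag i M]),
      (forall t, (t <= d)%N -> hilb_AG F t (nth 0%N (mdiag 0 M) t)),
      (forall i, (i < d)%N ->
         Oseq k (vsub (mdiag i M) (vplus (mdiag i.+1 M)))) &
      (forall i j, (i.+1 <= j)%N -> (j.+1 <= d)%N ->
         (mxe M i j + mxe M i.+1 j.+1 <= mxe M i.+1 j + mxe M i j.+1)%N)].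
Proof.
move=> _ le2n _ F_homog _ l_homog _ M_rank.
case: n le2n F l F_homog l_homog M_rank => // n _ F l F_homog l_homog M_rank.
split=> [i | t | i | i j].
- exact: (Oseq_mdiag F_homog l_homog M_rank).
- exact: (hilb_AG_mdiag0 M_rank).
- exact: (Oseq_mdiag_sub F_homog l_homog M_rank).
- exact: (mxe_frobenius F_homog l_homog M_rank).
Qed.
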